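(* Let $\Omega>0$, $M\ge 2$, $\omega_q=-\Omega+(q-1)\frac{2\Omega}{M-1}$ for $q=1,\dots,M$. For given $0<\sigma<m_{\min}$ and integer $n\geq 2$, let $$\tau=\frac{0.49e^{-3/2}}{\Omega}\Big(\frac{\sigma}{m_{\min}}\Big)^{\frac{1}{2n-1}}.$$ Then there exist a measure $\mu=\sum_{j=1}^n a_j\delta_{y_j}$ with supports $\{-\tau,-2\tau,\dots,-n\tau\}$ and a measure $\hat\mu=\sum_{j=1}^n\hat a_j\delta_{\hat y_j}$ with supports $\{0,\tau,\dots,(n-1)\tau\}$ such that $\|[\hat\mu]-[\mu]\|_\infty<\sigma$ and either $\min_{1\le j\le n}|a_j|=m_{\min}$ or $\min_{1\le j\le n}|\hat a_j|=m_{\min}$.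
   Context: For a discrete measure $\nu=\sum_j b_j\delta_{x_j}$ on $\mathbb R$, $\mathcal F\nu(\omega)=\sum_j b_je^{ix_j\omega}$ and $[\nu]=(\mathcal F\nu(\omega_1),\dots,\mathcal F\nu(\omega_M))^T\in\mathbb C^M$. *)

From Stdlib Require Import Reals Lra.
Open Scope R_scope.

Definition Cpx : Type := (R * R)%type.
Definition C0 : Cpx := (0, 0).
Definition Cadd (z w : Cpx) : Cpx := (fst z + fst w, snd z + snd w).
Definition Csub (z w : Cpx) : Cpx := (fst z - fst w, snd z - snd w).
Definition Cmul (z w : Cpx) : Cpx :=
  (fst z * fst w - snd z * snd w, fst z * snd w + snd z * fst w).
Definition Cabs (z : Cpx) : R := sqrt (fst z * fst z + snd z * snd z).
Definition Cexpi (t : R) : Cpx := (cos t, sin t).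

Fixpoint Csum (f : nat -> Cpx) (n : nat) : Cpx :=
  match n with
  | O => C0
  | S k => Cadd (Csum f k) (f (S k))
  end.

(* Fourier transform of the discrete measure nu = sum_{j=1}^n a_j delta_{x_j}:
   F nu (w) = sum_j a_j e^{i x_j w} *)
Definition fourier (n : nat) (a : nat -> Cpx) (x : nat -> R) (w : R) : Cpx :=
  Csum (fun j => Cmul (a j) (Cexpi (x j * w))) n.

(* min_{1<=j<=n} |a_j|  (only meaningful for n >= 1) *)
Fixpoint minabs (a : nat -> Cpx) (n : nat) : R :=
  match n with
  | O => 0
  | S O => Cabs (a 1%nat)
  | S k => Rmin (minabs a k) (Cabs (a (S k)))
  end.

Definition omega_pt (Omega : R) (M q : nat) : R :=
  - Omega + INR (q - 1) * (2 * Omega / INR (M - 1)).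

(* || [nu1] - [nu2] ||_inf over the M sample points *)
Fixpoint sup_diff (F G : R -> Cpx) (Omega : R) (M q : nat) : R :=
  match q with
  | O => 0
  | S k => Rmax (sup_diff F G Omega M k)
                (Cabs (Csub (F (omega_pt Omega M (S k))) (G (omega_pt Omega M (S k)))))
  end.

Definition tau_def (Omega sigma mmin : R) (n : nat) : R :=
  (49 / 100) * exp (- (3 / 2)) / Omega
  * Rpower (sigma / mmin) (1 / INR (2 * n - 1)).

(* Put m = 2n - 1 and let c_k be the coefficients of (1 - X)^m.  Giving the
   points -n tau, ..., -tau the weights -m_min c_0, ..., -m_min c_{n-1} and the
   points 0, ..., (n-1) tau the weights m_min c_n, ..., m_min c_m, the
   difference of the Fourier transforms is, up to the phase e^{-i n tau w},
   m_min (1 - e^{i tau w})^m.  Since |1 - e^{it}| <= |t| and |tau w| <= tau Omega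
   = 0.49 e^{-3/2} (sigma/m_min)^{1/m}, it is at most
   (0.49 e^{-3/2})^m sigma < sigma.  All weights are nonzero integers times
   m_min, and |c_m| = 1, so the right measure has minimal amplitude m_min. *)
From Stdlib Require Import Reals Lra Lia.
From Coquelicot Require Import Coquelicot.
Open Scope R_scope.

Lemma Cabs_Cmod (z : Cpx) : Cabs z = Cmod z.
Proof. unfold Cabs, Cmod. f_equal. simpl. ring. Qed.

Lemma Csub_Cminus (z w : Cpx) : Csub z w = Cminus z w.
Proof. destruct z, w. reflexivity. Qed.

Lemma Cabs_real (r : R) : Cabs (r, 0) = Rabs r.
Proof. unfold Cabs. simpl. rewrite <- sqrt_Rsqr_abs. unfold Rsqr. f_equal. ring. Qed.

Lemma Cexpi_add (s t : R) : Cmult (Cexpi s) (Cexpi t) = Cexpi (s + t).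
Proof. unfold Cexpi, Cmult. simpl. rewrite cos_plus, sin_plus. f_equal; ring. Qed.

Lemma Cexpi_natmul (k : nat) (t : R) : Cexpi (INR k * t) = Cpow (Cexpi t) k.
Proof.
  induction k as [|k IHk].
  - unfold Cexpi. simpl. rewrite Rmult_0_l, cos_0, sin_0. reflexivity.
  - simpl Cpow. rewrite <- IHk, Cexpi_add, S_INR. f_equal. ring.
Qed.

Lemma Cmod_Cexpi (t : R) : Cmod (Cexpi t) = 1.
Proof.
  unfold Cmod, Cexpi. simpl. transitivity (sqrt 1); [| apply sqrt_1]. f_equal.
  pose proof (sin2_cos2 t) as h. unfold Rsqr in h. nra.
Qed.

Lemma cos_ge_1_sub_sqr_div2 (t : R) : -2 <= t <= 2 -> 1 - t ^ 2 / 2 <= cos t.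
Proof.
  intro ht. destruct (pre_cos_bound t 0 ltac:(lra) ltac:(lra)) as [h _].
  unfold cos_approx, cos_term in h. simpl in h. lra.
Qed.

Lemma Cmod_1_sub_Cexpi_le (t : R) : -2 <= t <= 2 -> Cmod (Cminus 1 (Cexpi t)) <= Rabs t.
Proof.
  intro ht. rewrite <- sqrt_Rsqr_abs. unfold Cmod. apply sqrt_le_1_alt.
  unfold Cexpi, Cminus, Cplus, Copp, RtoC. simpl.
  pose proof (sin2_cos2 t). pose proof (cos_ge_1_sub_sqr_div2 t ht).
  unfold Rsqr in *. simpl in *. nra.
Qed.

(* [bcoef m k = (-1)^k * binomial m k], the coefficient of X^k in (1 - X)^m. *)
Fixpoint bcoef (m k : nat) : R :=
  match m with
  | O => match k with O => 1 | _ => 0 end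
  | S m' => bcoef m' k - match k with O => 0 | S k' => bcoef m' k' end
  end.

Lemma bcoef_gt (m k : nat) : (m < k)%nat -> bcoef m k = 0.
Proof.
  revert k; induction m as [|m IHm]; intros k hk; simpl.
  - destruct k; [lia | reflexivity].
  - destruct k; [lia |]. rewrite !IHm by lia. ring.
Qed.

Lemma bcoef_diag (m : nat) : bcoef m m = (-1) ^ m.
Proof.
  induction m as [|m IHm]; simpl; [reflexivity |].
  rewrite bcoef_gt, IHm by lia. ring.
Qed.

Lemma bcoef_sign_ge1 (m k : nat) : (k <= m)%nat -> 1 <= (-1) ^ k * bcoef m k.
Proof.
  revert k; induction m as [|m IHm]; intros k hk.
  - replace k with 0%nat by lia. simpl. lra.
  - destruct k as [|k]; simpl bcoef; simpl pow.
    + specialize (IHm 0%nat ltac:(lia)). simpl in IHm. lra.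
    + assert (hk' := IHm k ltac:(lia)).
      destruct (Nat.le_gt_cases (S k) m) as [h | h].
      * assert (hSk := IHm (S k) h). simpl pow in hSk. nra.
      * rewrite (bcoef_gt m (S k)) by lia. nra.
Qed.

Lemma Rabs_bcoef_ge1 (m k : nat) : (k <= m)%nat -> 1 <= Rabs (bcoef m k).
Proof.
  intro hk. apply Rle_trans with (1 := bcoef_sign_ge1 m k hk).
  replace (Rabs (bcoef m k)) with (Rabs ((-1) ^ k * bcoef m k))
    by (rewrite Rabs_mult, pow_1_abs; ring).
  apply Rle_abs.
Qed.

Lemma Rabs_bcoef_diag (m : nat) : Rabs (bcoef m m) = 1.
Proof. rewrite bcoef_diag. apply pow_1_abs. Qed.

Open Scope C_scope.

(* [Csum] returns a [Cpx]; retyping the equation as one in [C] lets [ring] see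
   Coquelicot's field structure. *)
Ltac Cring := match goal with |- ?a = ?b => change (@eq C a b) end; ring.

Fixpoint Csum0 (f : nat -> C) (N : nat) : C :=
  match N with O => f O | S N' => Csum0 f N' + f (S N') end.

Lemma Csum_0 (f : nat -> C) : Csum f 0 = RtoC 0.
Proof. reflexivity. Qed.

Lemma Csum_S (f : nat -> C) (n : nat) : Csum f (S n) = Csum f n + f (S n).
Proof. reflexivity. Qed.

Lemma Csum_ext (f g : nat -> C) (n : nat) :
  (forall j, (1 <= j <= n)%nat -> f j = g j) -> Csum f n = Csum g n.
Proof.
  induction n as [|n IHn]; intro h; [reflexivity |]. rewrite !Csum_S. f_equal.
  - apply IHn. intros; apply h; lia.
  - apply h; lia.
Qed.

Lemma Csum_S_l (f : nat -> C) (n : nat) :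
  Csum f (S n) = f 1%nat + Csum (fun j => f (S j)) n.
Proof.
  induction n as [|n IHn].
  - rewrite Csum_S, !Csum_0. Cring.
  - rewrite Csum_S, IHn, (Csum_S (fun j => f (S j))). Cring.
Qed.

Lemma Csum_mulr (f : nat -> C) (n : nat) (c : C) :
  Csum f n * c = Csum (fun j => f j * c) n.
Proof.
  induction n as [|n IHn].
  - rewrite !Csum_0. Cring.
  - rewrite !Csum_S, <- IHn. Cring.
Qed.

Lemma Csum_opp (f : nat -> C) (n : nat) : Csum (fun j => - f j) n = - Csum f n.
Proof.
  induction n as [|n IHn].
  - rewrite !Csum_0. Cring.
  - rewrite !Csum_S, IHn. Cring.
Qed.

Lemma Csum0_ext (f g : nat -> C) (N : nat) :
  (forall k, (k <= N)%nat -> f k = g k) -> Csum0 f N = Csum0 g N.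
Proof.
  induction N as [|N IHN]; intro h; simpl; [apply h; lia |]. f_equal.
  - apply IHN. intros; apply h; lia.
  - apply h; lia.
Qed.

Lemma Csum0_scal (c : C) (f : nat -> C) (N : nat) :
  Csum0 (fun k => c * f k) N = c * Csum0 f N.
Proof. induction N as [|N IHN]; simpl; [reflexivity |]. rewrite IHN. Cring. Qed.

Lemma Csum0_split (g : nat -> C) (a q : nat) :
  Csum0 g (a + q) = Csum0 g a + Csum (fun j => g (a + j)%nat) q.
Proof.
  induction q as [|q IHq].
  - rewrite Nat.add_0_r, Csum_0. Cring.
  - rewrite Nat.add_succ_r. simpl Csum0. rewrite IHq, Csum_S, Nat.add_succ_r. Cring.
Qed.

Lemma Csum_rev (g : nat -> C) (n : nat) :
  Csum (fun j => g (S n - j)%nat) (S n) = Csum0 g n.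
Proof.
  induction n as [|n IHn].
  - rewrite Csum_S, Csum_0. simpl. Cring.
  - rewrite Csum_S_l. simpl Csum0. rewrite <- IHn.
    replace (S (S n) - 1)%nat with (S n) by lia.
    rewrite (Csum_ext (fun j => g (S (S n) - S j)%nat) (fun j => g (S n - j)%nat))
      by (intros; f_equal; lia).
    Cring.
Qed.

Definition binom_partial (w : C) (m N : nat) : C :=
  Csum0 (fun k => RtoC (bcoef m k) * Cpow w k) N.

Lemma binom_partial_stable (w : C) (m N : nat) :
  (m <= N)%nat -> binom_partial w m (S N) = binom_partial w m N.
Proof. intro h. unfold binom_partial. simpl Csum0. rewrite bcoef_gt by lia. ring. Qed.

Lemma binom_partial_S (w : C) (m N : nat) :
  binom_partial w (S m) (S N) = binom_partial w m (S N) - w * binom_partial w m N.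
Proof.
  unfold binom_partial. induction N as [|N IHN].
  - simpl. rewrite !RtoC_minus. ring.
  - simpl Csum0 in *. rewrite IHN. simpl bcoef. rewrite RtoC_minus. simpl Cpow. ring.
Qed.

Lemma binomial_1_sub (w : C) (m : nat) : binom_partial w m m = Cpow (1 - w) m.
Proof.
  induction m as [|m IHm].
  - unfold binom_partial. simpl. ring.
  - rewrite binom_partial_S, binom_partial_stable, IHm by lia. simpl Cpow. ring.
Qed.

Close Scope C_scope.

Lemma minabs_ge (a : nat -> Cpx) (n : nat) (L : R) : (1 <= n)%nat ->
  (forall j, (1 <= j <= n)%nat -> L <= Cabs (a j)) -> L <= minabs a n.
Proof.
  induction n as [|n IHn]; intros hn h; [lia |].
  destruct n; simpl; [apply h; lia |].
  apply Rmin_glb; [apply IHn; [lia | intros; apply h; lia] | apply h; lia].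
Qed.

Lemma minabs_le_last (a : nat -> Cpx) (n : nat) : (1 <= n)%nat -> minabs a n <= Cabs (a n).
Proof.
  intro hn. destruct n as [|[|n]]; [lia | simpl; lra | apply Rmin_r].
Qed.

Lemma sup_diff_lt (F G : R -> Cpx) (Omega s : R) (M q : nat) : 0 < s -> (q <= M)%nat ->
  (forall k, (1 <= k <= M)%nat ->
     Cabs (Csub (F (omega_pt Omega M k)) (G (omega_pt Omega M k))) < s) ->
  sup_diff F G Omega M q < s.
Proof.
  intros hs; induction q as [|q IHq]; intros hq h; simpl; [lra |].
  apply Rmax_lub_lt; [apply IHq; [lia | exact h] | apply h; lia].
Qed.

Lemma Rabs_omega_pt_le (Omega : R) (M q : nat) : 0 < Omega -> (2 <= M)%nat ->
  (1 <= q <= M)%nat -> Rabs (omega_pt Omega M q) <= Omega.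
Proof.
  intros hO hM hq. unfold omega_pt.
  assert (hd : 0 < INR (M - 1)) by (apply lt_0_INR; lia).
  assert (hq0 : 0 <= INR (q - 1)) by apply pos_INR.
  assert (hq1 : INR (q - 1) <= INR (M - 1)) by (apply le_INR; lia).
  set (d := INR (M - 1)) in *. set (t := INR (q - 1)) in *.
  replace (t * (2 * Omega / d)) with (2 * Omega * (t / d)) by (field; lra).
  assert (0 <= t / d <= 1).
  { split; [apply Rdiv_le_0_compat; lra |].
    apply Rmult_le_reg_r with d; [lra |]. unfold Rdiv. rewrite Rmult_assoc, Rinv_l; lra. }
  apply Rabs_le. nra.
Qed.

Lemma Rpower_inv_nat_pow (x : R) (m : nat) : 0 < x -> (0 < m)%nat ->
  Rpower x (1 / INR m) ^ m = x.
Proof.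
  intros hx hm. assert (0 < INR m) by (apply lt_0_INR; lia).
  rewrite <- Rpower_pow by (unfold Rpower; apply exp_pos).
  rewrite Rpower_mult. replace (1 / INR m * INR m) with 1 by (field; lra).
  apply Rpower_1, hx.
Qed.

Definition amp (mm : R) (n j : nat) : Cpx := (- (mm * bcoef (2 * n - 1) (n - j)), 0).
Definition amp_hat (mm : R) (n j : nat) : Cpx := (mm * bcoef (2 * n - 1) (n + j - 1), 0).

Lemma fourier_diff_phase (mm tau w : R) (n : nat) : (1 <= n)%nat ->
  Cmult (Csub (fourier n (amp_hat mm n) (fun j => INR (j - 1) * tau) w)
              (fourier n (amp mm n) (fun j => - (INR j * tau)) w))
        (Cexpi (INR n * (tau * w)))
  = Cmult (RtoC mm) (Cpow (Cminus 1 (Cexpi (tau * w))) (2 * n - 1)).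
Proof.
  intro hn. set (m := (2 * n - 1)%nat). set (t := tau * w).
  set (g := fun k => Cmult (RtoC mm) (Cmult (RtoC (bcoef m k)) (Cexpi (INR k * t)))).
  assert (expand : Cmult (RtoC mm) (Cpow (Cminus 1 (Cexpi t)) m) = Csum0 g m).
  { unfold g. rewrite Csum0_scal, <- binomial_1_sub. unfold binom_partial. f_equal.
    apply Csum0_ext. intros k _. rewrite Cexpi_natmul. reflexivity. }
  rewrite expand. unfold fourier. rewrite Csub_Cminus.
  assert (distr : forall A B E : C, ((A - B) * E = A * E - B * E)%C) by (intros; ring).
  rewrite distr, !Csum_mulr. clear distr.
  rewrite (Csum_ext _ (fun j => g (n - 1 + j)%nat)).
  2:{ intros j hj. unfold g, amp_hat. fold m.
      change (mm * bcoef m (n + j - 1), 0) with (RtoC (mm * bcoef m (n + j - 1))).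
      rewrite <- Cmult_assoc, Cexpi_add, RtoC_mult.
      replace (n - 1 + j)%nat with (n + j - 1)%nat by lia.
      replace (INR (j - 1) * tau * w + INR n * t) with (INR (n + j - 1) * t).
      - ring.
      - unfold t. replace (n + j - 1)%nat with ((j - 1) + n)%nat by lia.
        rewrite plus_INR. ring. }
  set (right_part := Csum (fun j => g (n - 1 + j)%nat) n).
  rewrite (Csum_ext _ (fun j => Copp (g (n - j)%nat))).
  2:{ intros j hj. unfold g, amp. fold m.
      change (- (mm * bcoef m (n - j)), 0) with (RtoC (- (mm * bcoef m (n - j)))).
      rewrite <- Cmult_assoc, Cexpi_add, RtoC_opp, RtoC_mult.
      replace (- (INR j * tau) * w + INR n * t) with (INR (n - j) * t).
      - ring.
      - unfold t. rewrite minus_INR by lia. ring. }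
  rewrite Csum_opp.
  destruct n as [|n']; [lia |].
  rewrite Csum_rev. replace m with (S n' - 1 + S n')%nat by (unfold m; lia).
  unfold right_part. rewrite Csum0_split. replace (S n' - 1)%nat with n' by lia. Cring.
Qed.

Lemma Cabs_fourier_diff_le (mm tau w : R) (n : nat) :
  (1 <= n)%nat -> 0 <= mm -> Rabs (tau * w) <= 2 ->
  Cabs (Csub (fourier n (amp_hat mm n) (fun j => INR (j - 1) * tau) w)
             (fourier n (amp mm n) (fun j => - (INR j * tau)) w))
  <= mm * Rabs (tau * w) ^ (2 * n - 1).
Proof.
  intros hn hmm hw.
  rewrite Cabs_Cmod, <- (Rmult_1_r (Cmod _)), <- (Cmod_Cexpi (INR n * (tau * w))),
    <- Cmod_mult, fourier_diff_phase by exact hn.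
  rewrite Cmod_mult, Cmod_pow, Cmod_R, Rabs_pos_eq by exact hmm.
  apply Rmult_le_compat_l; [exact hmm |]. apply pow_incr. split.
  - apply Cmod_ge_0.
  - apply Cmod_1_sub_Cexpi_le, Rabs_le_between, hw.
Qed.

Lemma amp_neq0 (mm : R) (n j : nat) : mm <> 0 -> (j <= n)%nat -> amp mm n j <> C0.
Proof.
  intros hmm hj h. apply (f_equal fst) in h. cbn [fst amp C0] in h.
  assert (hb := Rabs_bcoef_ge1 (2 * n - 1) (n - j) ltac:(lia)).
  assert (bcoef (2 * n - 1) (n - j) = 0) as hz
    by (apply (Rmult_eq_reg_l mm); [lra | exact hmm]).
  rewrite hz, Rabs_R0 in hb. lra.
Qed.

Lemma amp_hat_neq0 (mm : R) (n j : nat) :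
  mm <> 0 -> (1 <= j <= n)%nat -> amp_hat mm n j <> C0.
Proof.
  intros hmm hj h. apply (f_equal fst) in h. cbn [fst amp_hat C0] in h.
  assert (hb := Rabs_bcoef_ge1 (2 * n - 1) (n + j - 1) ltac:(lia)).
  assert (bcoef (2 * n - 1) (n + j - 1) = 0) as hz
    by (apply (Rmult_eq_reg_l mm); [lra | exact hmm]).
  rewrite hz, Rabs_R0 in hb. lra.
Qed.

Lemma minabs_amp_hat (mm : R) (n : nat) : 0 <= mm -> (1 <= n)%nat ->
  minabs (amp_hat mm n) n = mm.
Proof.
  intros hmm hn.
  assert (habs : forall j, Cabs (amp_hat mm n j) = mm * Rabs (bcoef (2 * n - 1) (n + j - 1)))
    by (intro j; unfold amp_hat;
        rewrite Cabs_real, Rabs_mult, Rabs_pos_eq by exact hmm; reflexivity).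
  apply Rle_antisym.
  - eapply Rle_trans; [apply minabs_le_last, hn |].
    rewrite habs. replace (n + n - 1)%nat with (2 * n - 1)%nat by lia.
    rewrite Rabs_bcoef_diag. lra.
  - apply minabs_ge; [exact hn |]. intros j hj. rewrite habs.
    assert (hb := Rabs_bcoef_ge1 (2 * n - 1) (n + j - 1) ltac:(lia)). nra.
Qed.

Section TauScale.

Variables (Omega sigma mmin : R) (n : nat).
Hypotheses (hOmega : 0 < Omega) (hsigma : 0 < sigma) (hsm : sigma < mmin) (hn : (1 <= n)%nat).

Let c := 49 / 100 * exp (- (3 / 2)).
Let r := Rpower (sigma / mmin) (1 / INR (2 * n - 1)).

Lemma tau_def_mul_Omega : tau_def Omega sigma mmin n * Omega = c * r.
Proof. unfold tau_def. fold c r. field. lra. Qed.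

Lemma tau_constant_bounds : 0 < c < 1.
Proof.
  unfold c. pose proof (exp_pos (- (3 / 2))).
  assert (exp (- (3 / 2)) < 1) by (rewrite <- exp_0; apply exp_increasing; lra). lra.
Qed.

Lemma tau_root_bounds : 0 < r <= 1 /\ r ^ (2 * n - 1) = sigma / mmin.
Proof.
  assert (hq : 0 < sigma / mmin < 1).
  { split; [apply Rdiv_lt_0_compat; lra |]. apply Rmult_lt_reg_r with mmin; [lra |].
    unfold Rdiv. rewrite Rmult_assoc, Rinv_l; lra. }
  assert (hpow : r ^ (2 * n - 1) = sigma / mmin) by (apply Rpower_inv_nat_pow; lia || lra).
  assert (hr : 0 < r) by (unfold r, Rpower; apply exp_pos).
  split; [split; [exact hr |] | exact hpow].
  destruct (Rle_or_lt r 1) as [h | h]; [exact h |].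
  pose proof (Rlt_pow_R1 r (2 * n - 1) h ltac:(lia)). lra.
Qed.

Lemma tau_def_pos : 0 < tau_def Omega sigma mmin n.
Proof.
  destruct tau_constant_bounds, tau_root_bounds as [[] _].
  apply Rmult_lt_reg_r with Omega; [exact hOmega |].
  rewrite tau_def_mul_Omega, Rmult_0_l. nra.
Qed.

Lemma tau_def_mul_Omega_le1 : tau_def Omega sigma mmin n * Omega <= 1.
Proof. destruct tau_constant_bounds, tau_root_bounds as [[] _]. rewrite tau_def_mul_Omega. nra. Qed.

Lemma mmin_mul_pow_tau_def_lt :
  mmin * (tau_def Omega sigma mmin n * Omega) ^ (2 * n - 1) < sigma.
Proof.
  destruct tau_constant_bounds, tau_root_bounds as [_ hpow].
  rewrite tau_def_mul_Omega, Rpow_mult_distr, hpow.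
  assert (c ^ (2 * n - 1) < 1) by (apply pow_lt_1_compat; [lra | lia]).
  replace (mmin * (c ^ (2 * n - 1) * (sigma / mmin))) with (c ^ (2 * n - 1) * sigma)
    by (field; lra).
  nra.
Qed.

End TauScale.

Theorem proposition2p2 (Omega sigma mmin : R) (M n : nat)
  (hOmega : 0 < Omega) (hM : (2 <= M)%nat)
  (hsigma : 0 < sigma) (hsm : sigma < mmin) (hn : (2 <= n)%nat) :
  let tau := tau_def Omega sigma mmin n in
  exists (a ahat : nat -> Cpx),
    (forall j, (1 <= j <= n)%nat -> a j <> C0) /\
    (forall j, (1 <= j <= n)%nat -> ahat j <> C0) /\
    sup_diff (fourier n ahat (fun j => INR (j - 1) * tau))
             (fourier n a (fun j => - (INR j * tau))) Omega M M < sigma /\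
    (minabs a n = mmin \/ minabs ahat n = mmin).
Proof.
  intro tau. assert (hn1 : (1 <= n)%nat) by lia.
  exists (amp mmin n), (amp_hat mmin n).
  split; [| split; [| split]].
  - intros j hj. apply amp_neq0; [lra | lia].
  - intros j hj. apply amp_hat_neq0; [lra | lia].
  - apply sup_diff_lt; [lra | lia |]. intros k hk.
    assert (htau : 0 < tau) by exact (tau_def_pos Omega sigma mmin n hOmega hsigma hsm hn1).
    assert (htO : tau * Omega <= 1)
      by exact (tau_def_mul_Omega_le1 Omega sigma mmin n hOmega hsigma hsm hn1).
    assert (hw : Rabs (tau * omega_pt Omega M k) <= tau * Omega).
    { rewrite Rabs_mult, (Rabs_pos_eq tau) by lra.
      apply Rmult_le_compat_l; [lra | apply Rabs_omega_pt_le; assumption]. }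
    eapply Rle_lt_trans; [apply Cabs_fourier_diff_le; [exact hn1 | lra | lra] |].
    eapply Rle_lt_trans;
      [| exact (mmin_mul_pow_tau_def_lt Omega sigma mmin n hOmega hsigma hsm hn1)].
    apply Rmult_le_compat_l; [lra |]. apply pow_incr. split; [apply Rabs_pos | exact hw].
  - right. apply minabs_amp_hat; [lra | exact hn1].
Qed.
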